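(* Let $p$ be a design and let $\Omega\subseteq\{0,1\}^n$ be the set of treatment vectors it assigns positive probability, $m=|\Omega|$. Each unit $i$ has exposure levels $\{0,\dots,K_i-1\}$ given by $e_i=f(\mathbf z_{N_i})$ and potential outcomes $Y_i(z,e)$. Fix $(z_1,e_1)\ne(z_0,e_0)$ and let $\theta=\frac1n\sum_i\big(Y_i(z_1,e_1)-Y_i(z_0,e_0)\big)$, and $\pi_i(z,e)=P(Z_i=z,f(\mathbf Z_{N_i})=e)$. If for each $i$ we have $m>2K_i$ and $0<\pi_i(z_1,e_1)<1$, $0<\pi_i(z_0,e_0)<1$, then there are infinitely many estimators of the form $\hat\theta=\sum_iw_i(\mathbf Z)Y_i^{obs}$, with weight functions $w_i:\Omega\to\mathbb R$, that satisfy $\mathbb E[\hat\theta]=\theta$ for every choice of the real numbers $\{Y_i(z,e)\}$.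
   Context: Units $1,\dots,n$ each have an interference neighborhood $N_i\subseteq\{1,\dots,n\}\setminus\{i\}$ and exposure function $f$ mapping $\{0,1\}^{N_i}$ onto $\{0,\dots,K_i-1\}$. The observed outcome is $Y_i^{obs}=Y_i(Z_i,f(\mathbf Z_{N_i}))$. *)

From mathcomp Require Import all_boot all_order all_algebra.
Set Implicit Arguments. Unset Strict Implicit. Unset Printing Implicit Defensive.
Import Order.TTheory GRing.Theory Num.Theory.
Local Open Scope ring_scope.

(* Treatment vectors in {0,1}^n (true = treated). *)
Definition treat (n : nat) := {ffun 'I_n -> bool}.

Definition omega (R : realFieldType) n (p : treat n -> R) : {set treat n} :=
  [set z | 0 < p z].

Definition is_design (R : realFieldType) n (p : treat n -> R) : Prop :=
  (forall z, 0 <= p z) /\ \sum_z p z = 1.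

Definition pi_ie (R : realFieldType) n (K : 'I_n -> nat) (p : treat n -> R)
  (expo : forall i : 'I_n, treat n -> 'I_(K i)) (i : 'I_n) (z : bool) (e : nat) : R :=
  \sum_(v : treat n | (v i == z) && (val (expo i v) == e)) p v.

Definition Yobs n (R : Type) (K : 'I_n -> nat)
  (expo : forall i : 'I_n, treat n -> 'I_(K i)) (Y : 'I_n -> bool -> nat -> R)
  (i : 'I_n) (v : treat n) : R := Y i (v i) (val (expo i v)).

Definition expect_est (R : realFieldType) n (K : 'I_n -> nat) (p : treat n -> R)
  (expo : forall i : 'I_n, treat n -> 'I_(K i)) (Y : 'I_n -> bool -> nat -> R)
  (w : 'I_n -> treat n -> R) : R :=
  \sum_v p v * \sum_i w i v * Yobs expo Y i v.

Definition theta (R : realFieldType) n (Y : 'I_n -> bool -> nat -> R)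
  (z1 : bool) (e1 : nat) (z0 : bool) (e0 : nat) : R :=
  n%:R^-1 * \sum_i (Y i z1 e1 - Y i z0 e0).

Definition unbiased (R : realFieldType) n (K : 'I_n -> nat) (p : treat n -> R)
  (expo : forall i : 'I_n, treat n -> 'I_(K i))
  (z1 : bool) (e1 : nat) (z0 : bool) (e0 : nat) (w : 'I_n -> treat n -> R) : Prop :=
  forall Y : 'I_n -> bool -> nat -> R,
    expect_est p expo Y w = theta Y z1 e1 z0 e0.

From mathcomp Require Import all_boot all_order all_algebra.
From mathcomp Require Import ring.
Set Implicit Arguments. Unset Strict Implicit. Unset Printing Implicit Defensive.
Import Order.TTheory GRing.Theory Num.Theory.
Local Open Scope ring_scope.

(* The Horvitz-Thompson weights 1{Z_i = z, e_i = e} / pi_i(z, e) give an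
   unbiased estimator.  Since |Omega| > 2 K_i, two distinct treatment vectors
   a, b of Omega agree on the pair (Z_i, f(Z_{N_i})) of a fixed unit i0, so
   they produce the same observed outcome for i0 whatever the potential
   outcomes are.  Moving weight of unit i0 from b to a in the ratio p(a)/p(b)
   therefore leaves the expectation unchanged, and the amount moved is a free
   real parameter, which can avoid any finite list of weight systems. *)

Lemma sumr_pred1_mull (R : pzSemiRingType) (T : finType) (a : T) (F : T -> R) :
  \sum_v (v == a)%:R * F v = F a.
Proof.
by rewrite (bigD1 a) //= eqxx mul1r big1 ?addr0 // => v /negbTE->; rewrite mul0r.
Qed.

Lemma pigeonhole_in (T U : finType) (f : T -> U) (A : {pred T}) :
  (#|U| < #|A|)%N -> exists a b, [/\ a \in A, b \in A, a != b & f a = f b].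
Proof.
move=> ltUA.
have /existsP[a /existsP[b /and4P[Aa Ab neq_ab /eqP fab]]] :
    [exists a, exists b, [&& a \in A, b \in A, a != b & f a == f b]].
  apply: contraLR ltUA => no_collision; rewrite -leqNgt.
  apply: (leq_card_in f) => a b Aa Ab fab.
  apply/eqP; apply: contraNT no_collision => neq_ab.
  by apply/existsP; exists a; apply/existsP; exists b; rewrite Aa Ab neq_ab fab eqxx.
by exists a, b.
Qed.

Lemma exists_neq_all (R : realDomainType) (I : finType) (x : I -> R) :
  exists t, forall j, t != x j.
Proof.
exists (1 + \sum_j `|x j|) => j; rewrite gt_eqF //.
apply: (le_lt_trans (ler_norm _)); rewrite -[`|x j|]add0r ltr_leD //.
by rewrite (bigD1 j) //= lerDl sumr_ge0.
Qed.

Section Estimators.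

Variables (R : realFieldType) (n : nat) (p : treat n -> R) (K : 'I_n -> nat).
Variable expo : forall i : 'I_n, treat n -> 'I_(K i).

Lemma expect_estDZ (Y : 'I_n -> bool -> nat -> R) (w w' : 'I_n -> treat n -> R)
    (c : R) :
  expect_est p expo Y (fun i v => w i v + c * w' i v) =
  expect_est p expo Y w + c * expect_est p expo Y w'.
Proof.
rewrite /expect_est mulr_sumr -big_split /=; apply: eq_bigr => v _.
rewrite mulrCA -mulrDr; congr (_ * _).
rewrite mulr_sumr -big_split /=; apply: eq_bigr => i _; ring.
Qed.

Lemma unbiased_add_null (z1 : bool) (e1 : nat) (z0 : bool) (e0 : nat)
    (w w' : 'I_n -> treat n -> R) (c : R) :
  unbiased p expo z1 e1 z0 e0 w -> (forall Y, expect_est p expo Y w' = 0) ->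
  unbiased p expo z1 e1 z0 e0 (fun i v => w i v + c * w' i v).
Proof.
by move=> w_unbiased w'_null Y; rewrite expect_estDZ w_unbiased w'_null mulr0 addr0.
Qed.

Definition exposure_indicator (i : 'I_n) (v : treat n) (z : bool) (e : nat) : R :=
  ((v i == z) && (val (expo i v) == e))%:R.

Lemma sum_exposure_indicator (Y : 'I_n -> bool -> nat -> R) i z e :
  \sum_v p v * exposure_indicator i v z e * Yobs expo Y i v =
  Y i z e * pi_ie p expo i z e.
Proof.
rewrite /pi_ie mulr_sumr [RHS]big_mkcond /=; apply: eq_bigr => v _.
rewrite /exposure_indicator /Yobs.
case: andP => [[/eqP-> /eqP->]|_]; last by rewrite mulr0 mul0r.
by rewrite mulr1 mulrC.
Qed.

Definition ht_weights (z1 : bool) (e1 : nat) (z0 : bool) (e0 : nat)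
    (i : 'I_n) (v : treat n) : R :=
  n%:R^-1 * (exposure_indicator i v z1 e1 / pi_ie p expo i z1 e1
             - exposure_indicator i v z0 e0 / pi_ie p expo i z0 e0).

Lemma ht_unbiased (z1 : bool) (e1 : nat) (z0 : bool) (e0 : nat) :
  (forall i, pi_ie p expo i z1 e1 != 0) -> (forall i, pi_ie p expo i z0 e0 != 0) ->
  unbiased p expo z1 e1 z0 e0 (ht_weights z1 e1 z0 e0).
Proof.
move=> pi1_neq0 pi0_neq0 Y; rewrite /expect_est /theta mulr_sumr.
under eq_bigr do rewrite mulr_sumr.
rewrite exchange_big; apply: eq_bigr => i _ /=.
transitivity (n%:R^-1 *
  ((\sum_v p v * exposure_indicator i v z1 e1 * Yobs expo Y i v) / pi_ie p expo i z1 e1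
 - (\sum_v p v * exposure_indicator i v z0 e0 * Yobs expo Y i v) / pi_ie p expo i z0 e0)).
  rewrite !mulr_suml -sumrB mulr_sumr; apply: eq_bigr => v _.
  rewrite /ht_weights; ring.
by rewrite !sum_exposure_indicator !mulfK.
Qed.

Definition null_weights (i0 : 'I_n) (a b : treat n) (i : 'I_n) (v : treat n) : R :=
  (i == i0)%:R * ((v == a)%:R - (v == b)%:R * (p a / p b)).

Lemma expect_null_weights (Y : 'I_n -> bool -> nat -> R) i0 (a b : treat n) :
  p b != 0 -> a i0 = b i0 -> expo i0 a = expo i0 b ->
  expect_est p expo Y (null_weights i0 a b) = 0.
Proof.
move=> pb_neq0 eq_treat eq_expo; rewrite /expect_est.
transitivity (\sum_v ((v == a)%:R * (p v * Yobs expo Y i0 v)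
                      - p a / p b * ((v == b)%:R * (p v * Yobs expo Y i0 v)))).
  apply: eq_bigr => v _.
  under eq_bigr do rewrite /null_weights -mulrA.
  rewrite sumr_pred1_mull; ring.
by rewrite sumrB -mulr_sumr !sumr_pred1_mull /Yobs eq_treat eq_expo mulrA divfK ?subrr.
Qed.

End Estimators.

Theorem proposition17 (R : realFieldType) (n : nat) (n_gt0 : (0 < n)%N)
  (p : treat n -> R) (Hp : is_design p)
  (N : 'I_n -> {set 'I_n}) (HN : forall i, i \notin N i)
  (K : 'I_n -> nat) (expo : forall i : 'I_n, treat n -> 'I_(K i))
  (Hloc : forall i (v v' : treat n), (forall j, j \in N i -> v j = v' j) ->
            expo i v = expo i v')
  (Honto : forall i (e : 'I_(K i)), exists v : treat n, expo i v = e)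
  (z1 : bool) (e1 : nat) (z0 : bool) (e0 : nat)
  (Hneq : (z1, e1) <> (z0, e0))
  (Hm : forall i, (2 * K i < #|omega p|)%N)
  (Hpi1 : forall i, 0 < pi_ie p expo i z1 e1 < 1)
  (Hpi0 : forall i, 0 < pi_ie p expo i z0 e0 < 1) :
  (* infinitely many weight systems w_i : Omega -> R (identified up to their
     values on Omega) give unbiased estimators: every finite list of them
     misses some unbiased one (differing on Omega) *)
  forall (k : nat) (ws : 'I_k -> ('I_n -> treat n -> R)),
  exists w : 'I_n -> treat n -> R,
    unbiased p expo z1 e1 z0 e0 w /\
    forall j : 'I_k, exists i (v : treat n), v \in omega p /\ w i v <> ws j i v.
Proof.
move=> k ws; pose i0 : 'I_n := Ordinal n_gt0.
have [a [b [a_in b_in neq_ab [eq_treat eq_expo]]]] : exists a b,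
    [/\ a \in omega p, b \in omega p, a != b
       & (a i0, expo i0 a) = (b i0, expo i0 b)].
  by apply: pigeonhole_in; rewrite card_prod card_bool card_ord.
have pb_neq0 : p b != 0 by rewrite inE in b_in; rewrite gt_eqF.
pose w0 := ht_weights p expo z1 e1 z0 e0.
have [t t_fresh] := exists_neq_all (fun j => ws j i0 a).
exists (fun i v => w0 i v + (t - w0 i0 a) * null_weights p i0 a b i v); split.
  apply: unbiased_add_null.
    apply: ht_unbiased => i.
      by case/andP: (Hpi1 i) => /lt0r_neq0.
    by case/andP: (Hpi0 i) => /lt0r_neq0.
  by move=> Y; apply: expect_null_weights.
move=> j; exists i0, a; split=> //; apply/eqP.
by rewrite /null_weights !eqxx (negbTE neq_ab) mul0r subr0 !mulr1 addrC subrK.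
Qed.
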